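(* Let $\iota:\emptyset\to\{\bullet\}$. Then, in $\mathrm{Top}$, $\{\iota\}^{lrrl}$ is the class of maps of the form $A\to A\sqcup B$, i.e. (up to isomorphism) inclusions of a space $A$ as a summand of a disjoint union (coproduct) $A\sqcup B$ with some space $B$.
   Context: For continuous maps $f:A\to B$, $g:C\to D$, $f\pitchfork g$ means: for all continuous $t:A\to C$, $b:B\to D$ with $g\circ t=b\circ f$ there is continuous $d:B\to C$ with $d\circ f=t$, $g\circ d=b$. For a class $P$, $P^l=\{f: f\pitchfork g\ \forall g\in P\}$, $P^r=\{g: f\pitchfork g\ \forall f\in P\}$, and $P^{lrrl}=(((P^l)^r)^r)^l$. *)

From HB Require Import structures.
From mathcomp Require Import all_boot all_order all_algebra.
From mathcomp Require Import all_classical all_reals all_analysis.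

Set Implicit Arguments.
Unset Strict Implicit.
Unset Printing Implicit Defensive.

Local Open Scope classical_set_scope.

Record arrow := Arrow {
  adom : topologicalType;
  acod : topologicalType;
  amap : adom -> acod;
  acont : continuous amap }.

Definition lifts (f g : arrow) : Prop :=
  forall (t : adom f -> adom g) (b : acod f -> acod g),
    continuous t -> continuous b -> @amap g \o t = b \o @amap f ->
    exists d : acod f -> adom g,
      [/\ continuous d, d \o @amap f = t & @amap g \o d = b].

Definition lorth (P : arrow -> Prop) : arrow -> Prop :=
  fun f => forall g, P g -> lifts f g.
Definition rorth (P : arrow -> Prop) : arrow -> Prop :=
  fun g => forall f, P f -> lifts f g.

(* P^{lrrl} = (((P^l)^r)^r)^l *)
Definition lrrl (P : arrow -> Prop) : arrow -> Prop :=
  lorth (rorth (rorth (lorth P))).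

(* the empty space and the one-point space (their unique topologies) *)
Definition emptySp : topologicalType := discrete_topology void.
Definition pointSp : topologicalType := discrete_topology unit.

Definition iota_fun : emptySp -> pointSp := fun v => match v with end.
Lemma iota_cont : continuous iota_fun.
Proof. by case. Qed.

Definition iota_arrow : arrow := Arrow iota_cont.

Definition homeomorphism (X Y : topologicalType) (h : X -> Y) : Prop :=
  exists g : Y -> X, [/\ continuous h, continuous g, cancel h g & cancel g h].

(* coproduct A ⊔ B in Top: the sigma-type over bool with the sum topology *)
Definition coprodSp (A B : topologicalType) : bool -> topologicalType :=
  fun b => if b then A else B.
Definition coprod (A B : topologicalType) : topologicalType :=
  {b : bool & coprodSp A B b}.
Definition inlc (A B : topologicalType) : A -> coprod A B :=
  existT (coprodSp A B) true.

Definition summand_inclusion (f : arrow) : Prop :=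
  exists (B : topologicalType) (h : acod f -> coprod (adom f) B),
    homeomorphism h /\ h \o @amap f = @inlc (adom f) B.

(* The class {ι}^l consists of the maps with inhabited domain together with the maps
   between empty spaces.  Lifting against the maps 1 → Y and 2 → 1 shows that a map in
   {ι}^lr with inhabited domain has a continuous section and is injective, so {ι}^lr
   consists of the homeomorphisms and the maps out of empty spaces; consequently {ι}^lrr
   is the class of maps with a continuous section.  A summand inclusion A → A ⊔ B lifts
   against such a map by using the given square on A and the section on B.  Conversely,
   if f : A → X lifts against the split epimorphism [f, id] : A ⊔ X → X, the lift
   d : X → A ⊔ X cuts X into the open pieces d⁻¹(A) = f(A) and B := d⁻¹(X), and
   [f, incl] : A ⊔ B → X is a continuous open bijection. *)

From HB Require Import structures.
From mathcomp Require Import all_boot all_order all_algebra.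
From mathcomp Require Import all_classical all_reals all_analysis.

Set Implicit Arguments.
Unset Strict Implicit.
Unset Printing Implicit Defensive.

Local Open Scope classical_set_scope.

Lemma continuous_id (X : topologicalType) : continuous (@id X).
Proof. by move=> x. Qed.

Lemma continuous_empty_dom (X Y : topologicalType) (h : X -> Y) :
  (X -> False) -> continuous h.
Proof. by move=> eX x; case: (eX x). Qed.

Lemma continuous_comp_fun (X Y Z : topologicalType) (h : X -> Y) (k : Y -> Z) :
  continuous h -> continuous k -> continuous (k \o h).
Proof. by move=> ch ck x; exact: continuous_comp (ch x) (ck (h x)). Qed.

Lemma continuous_discrete (T : choiceType) (Z : topologicalType)
    (g : discrete_topology T -> Z) : continuous g.
Proof. by apply/continuousP => U _; exact: discrete_open. Qed.

Definition open_map (X Y : topologicalType) (h : X -> Y) : Prop :=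
  forall U, open U -> open (h @` U).

Lemma open_map_sigT_fun (I : choiceType) (X : I -> topologicalType)
    (Z : topologicalType) (f : forall i, X i -> Z) :
  (forall i, open_map (f i)) ->
  open_map (fun x : {i & X i} => f (projT1 x) (projT2 x)).
Proof.
move=> fo U oU.
have -> : (fun x : {i & X i} => f (projT1 x) (projT2 x)) @` U =
    \bigcup_i f i @` (existT X i @^-1` U).
  apply/seteqP; split => [_ [[i x] Ux <-]|z [i _ [x Ux <-]]].
    by exists i => //; exists x.
  by exists (existT X i x).
by apply: bigcup_open => i _; apply: fo; move/sigT_openP: oU.
Qed.

Lemma open_map_set_val (X : topologicalType) (S : set X) :
  open S -> open_map (set_val : set_type S -> X).
Proof.
move=> oS _ [V oV <-].
have -> : @set_val X S @` (set_val @^-1` V) = S `&` V.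
  apply/seteqP; split => [_ [u Vu <-]|x [Sx Vx]].
    by split; [exact: set_valP|].
  by exists (exist _ x (mem_set Sx)).
exact: openI.
Qed.

Lemma continuous_open_bijection_homeomorphism (X Y : topologicalType)
    (h : X -> Y) :
  continuous h -> injective h -> (forall y, exists x, h x = y) ->
  open_map h -> homeomorphism h.
Proof.
move=> ch hinj /choice[g hg] oh.
have gh : cancel h g by move=> x; apply: hinj; rewrite hg.
exists g; split => //; apply/continuousP => U oU.
suff -> : g @^-1` U = h @` U by exact: oh.
apply/seteqP; split => [y Ugy|_ [x Ux <-]]; last by rewrite /preimage /= gh.
by exists (g y); rewrite ?hg.
Qed.

Definition inrc (A B : topologicalType) : B -> coprod A B :=
  existT (coprodSp A B) false.

Definition copair (A B Z : topologicalType) (fa : A -> Z) (fb : B -> Z) :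
    coprod A B -> Z :=
  fun p => (if projT1 p as b return coprodSp A B b -> Z then fa else fb)
             (projT2 p).

Section Copairing.
Variables (A B Z : topologicalType) (fa : A -> Z) (fb : B -> Z).

Lemma continuous_inlc : continuous (@inlc A B).
Proof. exact: (@existT_continuous _ (coprodSp A B) true). Qed.

Lemma continuous_inrc : continuous (@inrc A B).
Proof. exact: (@existT_continuous _ (coprodSp A B) false). Qed.

Lemma continuous_copair :
  continuous fa -> continuous fb -> continuous (copair fa fb).
Proof.
move=> ca cb.
by apply: (@sigT_continuous _ (coprodSp A B) Z
  (fun b => if b as b0 return coprodSp A B b0 -> Z then fa else fb)) => -[].
Qed.

Lemma open_map_copair : open_map fa -> open_map fb -> open_map (copair fa fb).
Proof.
move=> oa ob.
by apply: (@open_map_sigT_fun _ (coprodSp A B) Z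
  (fun b => if b as b0 return coprodSp A B b0 -> Z then fa else fb)) => -[].
Qed.

End Copairing.

Lemma emptySp_empty : emptySp -> False. Proof. by case. Qed.

Definition iota_class : arrow -> Prop := fun g => g = iota_arrow.

Definition split_epi (g : arrow) : Prop :=
  exists s : acod g -> adom g, continuous s /\ cancel s (@amap g).

Lemma lifts_homeomorphism (f g : arrow) :
  homeomorphism (@amap f) -> lifts f g.
Proof.
move=> [k [_ ck fK kK]] t b ct cb tb.
exists (t \o k); split.
- exact: continuous_comp_fun ck ct.
- by apply/funext => x /=; rewrite fK.
- apply/funext => y /=.
  by have /= -> := congr1 (fun F => F (k y)) tb; rewrite kK.
Qed.

Lemma lifts_empty_dom_split_epi (f g : arrow) :
  (adom f -> False) -> split_epi g -> lifts f g.
Proof.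
move=> ef [s [cs sK]] t b ct cb _.
exists (s \o b); split.
- exact: continuous_comp_fun cb cs.
- by apply/funext => x; case: (ef x).
- by apply/funext => y /=; rewrite sK.
Qed.

Lemma lorth_iota_of_inhabited (f : arrow) : adom f -> lorth iota_class f.
Proof. by move=> a g -> t b _ _ _; case: (t a). Qed.

Lemma lorth_iota_empty_cod (f : arrow) :
  lorth iota_class f -> (adom f -> False) -> acod f -> False.
Proof.
move=> lf ef y.
have [d _] := lf iota_arrow erefl (fun a => False_rect emptySp (ef a))
  (fun _ => tt : pointSp) (continuous_empty_dom ef)
  (@cst_continuous _ pointSp tt)
  (funext (fun a => False_ind _ (ef a))).
by case: (d y).
Qed.

Lemma lr_iota_of_empty_dom (g : arrow) :
  (adom g -> False) -> rorth (lorth iota_class) g.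
Proof.
move=> eg f lf t b _ _ _.
have ef : acod f -> False := lorth_iota_empty_cod lf (fun a => eg (t a)).
exists (fun y => False_rect (adom g) (ef y)); split.
- exact: continuous_empty_dom.
- by apply/funext => x; case: (eg (t x)).
- by apply/funext => y; case: (ef y).
Qed.

Section LrIota.
Variables (g : arrow) (lr_g : rorth (lorth iota_class) g).

Lemma lr_iota_injective : injective (@amap g).
Proof.
move=> c1 c2 gc.
pose two := @Arrow (discrete_topology bool) pointSp (fun _ => tt)
  (@cst_continuous _ pointSp tt).
pose t : discrete_topology bool -> adom g := fun b => if b then c1 else c2.
have tc : @amap g \o t = (fun _ => @amap g c1) \o @amap two.
  by apply/funext => -[] /=.
have [d [_ dt _]] := lr_g (lorth_iota_of_inhabited (true : adom two))
  (@continuous_discrete _ _ t) (@cst_continuous _ _ (@amap g c1)) tc.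
by rewrite -[c1]/(t true) -[c2]/(t false) -dt.
Qed.

Lemma lr_iota_split_epi : adom g -> split_epi g.
Proof.
move=> c.
pose pt := @Arrow pointSp (acod g) (fun _ => @amap g c)
  (@cst_continuous _ _ (@amap g c)).
have [d [cd _ gd]] := lr_g (lorth_iota_of_inhabited (tt : adom pt))
  (@cst_continuous _ _ c) (@continuous_id _) erefl.
by exists d; split => // y; rewrite -[y in RHS]/(id y) -gd.
Qed.

Lemma lr_iota_homeomorphism : adom g -> homeomorphism (@amap g).
Proof.
move=> /lr_iota_split_epi [s [cs sK]].
by exists s; split => //; [exact: acont | move=> x; apply: lr_iota_injective].
Qed.

End LrIota.

Lemma lrr_iota_split_epi (g : arrow) :
  rorth (rorth (lorth iota_class)) g <-> split_epi g.
Proof.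
split => [lrr_g | sg f lr_f].
  pose e := @Arrow emptySp (acod g) (fun v => match v with end)
    (continuous_empty_dom emptySp_empty).
  have [s [cs _ gs]] := lrr_g e (@lr_iota_of_empty_dom e emptySp_empty)
    (fun v : emptySp => match v with end) id
    (continuous_empty_dom emptySp_empty) (@continuous_id _)
    (funext (fun v : emptySp => match v with end)).
  by exists s; split => // y; rewrite -[y in RHS]/(id y) -gs.
have [[a]|ef] := pselect (inhabited (adom f)).
  exact/lifts_homeomorphism/(lr_iota_homeomorphism lr_f).
by apply: lifts_empty_dom_split_epi => // a; apply: ef.
Qed.

Lemma summand_inclusion_lifts_split_epi (f g : arrow) :
  summand_inclusion f -> split_epi g -> lifts f g.
Proof.
move=> [B [h [[k [ch ck hK kK]] hf]]] [s [cs sK]] t b ct cb tb.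
have hfa a : h (@amap f a) = inlc B a := congr1 (fun F => F a) hf.
have tba a : @amap g (t a) = b (@amap f a) := congr1 (fun F => F a) tb.
have kf a : k (inlc B a) = @amap f a by rewrite -hfa hK.
pose r := s \o b \o k \o @inrc (adom f) B.
have cr : continuous r := continuous_comp_fun (@continuous_inrc _ B)
  (continuous_comp_fun ck (continuous_comp_fun cb cs)).
exists (copair t r \o h); split.
- exact: continuous_comp_fun ch (continuous_copair ct cr).
- by apply/funext => a /=; rewrite hfa.
- apply/funext => x /=; rewrite -[in RHS](hK x).
  case: (h x) => -[] y /=; last by rewrite sK.
  by rewrite -[existT _ true y]/(inlc B y) kf tba.
Qed.

Definition codiagonal (f : arrow) : arrow :=
  Arrow (continuous_copair (@acont f) (@continuous_id (acod f))).

Lemma split_epi_codiagonal (f : arrow) : split_epi (codiagonal f).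
Proof.
by exists (@inrc (adom f) (acod f)); split => //; exact: continuous_inrc.
Qed.

Section SummandOfRetraction.
Variables (A X : topologicalType) (f : A -> X) (d : X -> coprod A X).
Hypotheses (cf : continuous f) (cd : continuous d).
Hypotheses (dfE : forall a, d (f a) = inlc X a) (dK : cancel d (copair f id)).

Definition cosummand : set X := [set x | projT1 (d x) = false].

Lemma open_cosummand : open cosummand.
Proof.
apply: ((continuousP d).1 cd [set p | projT1 p = false]).
apply/sigT_openP => -[].
- by rewrite (_ : _ @^-1` _ = set0); [exact: open0 | rewrite predeqE].
- by rewrite (_ : _ @^-1` _ = setT); [exact: openT | rewrite predeqE].
Qed.

Lemma open_map_summand : open_map f.
Proof.
move=> U oU; have -> : f @` U = d @^-1` (inlc X @` U).
  apply/seteqP; split => [_ [a Ua <-]|x [a Ua dx]].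
    by exists a; rewrite ?dfE.
  by exists a; rewrite // -(dK x) -dx.
exact: (continuousP d).1 cd _ (@existT_open_map _ (coprodSp A X) true _ oU).
Qed.

Definition glue : coprod A (set_type cosummand) -> X := copair f set_val.

Lemma glue_injective : injective glue.
Proof.
move=> [[] p] [[] q]; rewrite /glue /copair /= => e.
- suff -> : q = p by [].
  apply: (@existT_inj2 _ (coprodSp A X) true).
  by rewrite -[LHS]/(inlc X q) -[RHS]/(inlc X p) -!dfE e.
- by have := set_valP q; rewrite /cosummand /= -set_valE -e dfE.
- by have := set_valP p; rewrite /cosummand /= -set_valE e dfE.
- by congr existT; apply: val_inj.
Qed.

Lemma glue_surjective x : exists p, glue p = x.
Proof.
case dx: (d x) => [[] y].
- by exists (inlc _ y); rewrite -(dK x) dx.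
- have cx : cosummand x by rewrite /cosummand /= dx.
  by exists (@inrc A (set_type cosummand) (exist _ x (mem_set cx))).
Qed.

Lemma glue_homeomorphism : homeomorphism glue.
Proof.
apply: continuous_open_bijection_homeomorphism.
- exact/continuous_copair/initial_continuous.
- exact: glue_injective.
- exact: glue_surjective.
- exact/open_map_copair/open_map_set_val/open_cosummand/open_map_summand.
Qed.

Lemma summand_inclusion_of_retraction :
  exists (B : topologicalType) (h : X -> coprod A B),
    homeomorphism h /\ h \o f = inlc B.
Proof.
have [k [cglue ck glueK kK]] := glue_homeomorphism.
exists (set_type cosummand), k; split; first by exists glue; split.
apply/funext => a /=.
by rewrite -[f a]/(glue (inlc (set_type cosummand) a)) glueK.
Qed.

End SummandOfRetraction.

Lemma summand_inclusion_of_lifts_codiagonal (f : arrow) :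
  lifts f (codiagonal f) -> summand_inclusion f.
Proof.
move=> lf.
have [d [cd /funeqP dfE /funeqP dK]] :=
  lf (inlc (acod f)) id (@continuous_inlc _ (acod f)) (@continuous_id _) erefl.
exact: summand_inclusion_of_retraction (@acont f) cd dfE dK.
Qed.

Theorem mainTheorem17 (f : arrow) :
  lrrl (fun g => g = iota_arrow) f <-> summand_inclusion f.
Proof.
split => [lrrl_f | sf g /lrr_iota_split_epi].
  apply/summand_inclusion_of_lifts_codiagonal/lrrl_f.
  exact/lrr_iota_split_epi/split_epi_codiagonal.
exact: summand_inclusion_lifts_split_epi.
Qed.
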